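(* Let $n$ be a positive integer, $S\subseteq S_n$ a subset containing the identity, $G$ the subgroup generated by $S$, $p\ne q$ primes, and $c\in G$ an element of order $p$. Call a configuration $x\in\mathbb{Z}_q^n$ semi-homogeneous if for every $g\in G$ the coordinates $x_{g(1)},x_{gc(1)},x_{gc^2(1)},\dots,x_{gc^{p-1}(1)}$ are all equal. If $x$ is not semi-homogeneous, then there is no move $y\in\mathbb{Z}_q^n$ such that for every $\sigma\in S$ the configuration $x'+y$ is semi-homogeneous, where $x'$ is defined by $x'_{\sigma(i)}=x_i$.
   Context: Permutations in $S_n$ are composed as functions, $(gh)(i)=g(h(i))$. *)

From mathcomp Require Import all_boot all_algebra all_fingroup.
Set Implicit Arguments. Unset Strict Implicit. Unset Printing Implicit Defensive.
Import GRing.Theory.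
Local Open Scope group_scope.

(* Points are 'I_n (0-based), so the paper's point 1 is the ordinal 0 = Ordinal hn.
   Permutations are applied as functions: g ((c ^+ k) i0) is the paper's g c^k (1). *)
Definition semi_homogeneous (n q p : nat) (hn : (0 < n)%N) (G : {set 'S_n})
  (c : 'S_n) (x : 'I_n -> 'Z_q) : Prop :=
  forall g : 'S_n, g \in G -> forall k : nat, (k < p)%N ->
    x (g ((c ^+ k) (Ordinal hn))) = x (g (Ordinal hn)).

(* x' with x'_{sigma(i)} = x_i, i.e. x'_j = x_{sigma^-1(j)} *)
Definition perm_config (n q : nat) (sigma : 'S_n) (x : 'I_n -> 'Z_q) : 'I_n -> 'Z_q :=
  fun j => x ((sigma^-1)%g j).

From mathcomp Require Import all_boot all_algebra all_fingroup.

(* Write [d_x(g) = x_{g c(1)} - x_{g(1)}].  A move [y] that makes every [x' + y]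
   semi-homogeneous forces [d_x(sigma^-1 g) = -d_y(g) = d_x(g)] for all [g] in [G] and
   [sigma] in [S], so [d_x] is constant on [G], say equal to [a].  Along the orbit of
   [c] the values of [x] then form the progression [x_1 + j a], and [c^p = 1] gives
   [p a = 0] in [Z_q]; since [p] is invertible modulo [q], [a = 0], i.e. [x] itself is
   semi-homogeneous. *)

Set Implicit Arguments.
Unset Strict Implicit.
Unset Printing Implicit Defensive.
Local Open Scope group_scope.
Import GRing.Theory.

Lemma gen_right_invariant_const (gT : finGroupType) (T : Type) (S : {set gT})
    (F : gT -> T) :
  (forall s g, s \in S -> g \in <<S>> -> F (g * s) = F g) ->
  {in <<S>>, forall g, F g = F 1}.
Proof.
move=> F_inv g /gen_prodgP[m [t tS ->]] {g}.
elim: m t tS => [|m IHm] t tS; first by rewrite big_ord0.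
rewrite big_ord_recr /= F_inv //; first exact: IHm.
by apply/gen_prodgP; exists m, (fun i => t (widen_ord (leqnSn m) i)).
Qed.

Lemma Zp_mulrn_eq0 (q m : nat) (a : 'Z_q) :
  (1 < q)%N -> coprime q m -> (a *+ m = 0)%R -> a = 0%R.
Proof.
move=> q_gt1 co_qm am0.
have m_unit : (m%:R : 'Z_q)%R \is a GRing.unit by rewrite unitZpE.
by apply: (GRing.mulrI m_unit); rewrite mulr0 mulr_natl.
Qed.

Section Jump.

Variables (n : nat) (V : zmodType) (c : 'S_n) (i : 'I_n).

Definition jump (x : 'I_n -> V) (h : 'S_n) : V := (x (h (c i)) - x (h i))%R.

Lemma jump_add (x y : 'I_n -> V) h :
  jump (fun j => x j + y j)%R h = (jump x h + jump y h)%R.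
Proof. by rewrite /jump opprD addrACA. Qed.

Lemma orbit_progression (x : 'I_n -> V) a :
  (forall j, jump x (c ^+ j) = a) -> forall j, x ((c ^+ j) i) = (x i + a *+ j)%R.
Proof.
move=> jump_a; elim=> [|j IHj]; first by rewrite expg0 perm1 mulr0n addr0.
by rewrite expgS permM mulrS addrCA -IHj -(jump_a j) /jump subrK.
Qed.

Lemma jump_mulrn_order (x : 'I_n -> V) a :
  (forall j, jump x (c ^+ j) = a) -> (a *+ #[c] = 0)%R.
Proof.
move=> jump_a; apply: (addrI (x i)).
by rewrite -orbit_progression // expg_order perm1 addr0.
Qed.

End Jump.

Lemma jump_perm_config (n q : nat) (c s : 'S_n) (i : 'I_n) (x : 'I_n -> 'Z_q) h :
  jump c i (perm_config s x) h = jump c i x (h * s^-1).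
Proof. by rewrite /jump /perm_config !permM. Qed.

Lemma semi_homogeneousP (n q p : nat) (hn : (0 < n)%N) (G : {group 'S_n}) c
    (x : 'I_n -> 'Z_q) :
  (1 < p)%N -> c \in G ->
  semi_homogeneous p hn G c x <-> {in G, forall g, jump c (Ordinal hn) x g = 0%R}.
Proof.
move=> p_gt1 cG; split=> [sh_x g gG | jump0 g gG].
  by apply/eqP; rewrite subr_eq0; have := sh_x g gG 1%N p_gt1; rewrite expg1 => ->.
elim=> [|k IHk] lt_kp; first by rewrite expg0 perm1.
have /eqP := jump0 _ (groupM (groupX k cG) gG).
by rewrite subr_eq0 /= !permM -[(c ^+ k) _]permM -expgS => /eqP ->; rewrite IHk // ltnW.
Qed.

Theorem mainTheorem11 (n : nat) (hn : (0 < n)%N) (S : {set 'S_n}) (p q : nat)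
  (c : 'S_n) (x : 'I_n -> 'Z_q) :
  1 \in S -> prime p -> prime q -> p != q -> c \in <<S>> -> #[c] = p ->
  ~ semi_homogeneous p hn <<S>> c x ->
  ~ (exists y : 'I_n -> 'Z_q, forall sigma : 'S_n, sigma \in S ->
       semi_homogeneous p hn <<S>> c (fun j => (perm_config sigma x j + y j)%R)).
Proof.
move=> S1 p_prime q_prime neq_pq cG oc nsh_x [y sh_xy]; apply: nsh_x.
have p_gt1 := prime_gt1 p_prime.
pose i0 := Ordinal hn.
have jump_sum0 s g : s \in S -> g \in <<S>> ->
    (jump c i0 x (g * s^-1) + jump c i0 y g = 0)%R.
  move=> sS gG; rewrite -jump_perm_config -jump_add.
  exact: (semi_homogeneousP _ _ p_gt1 cG).1 (sh_xy s sS) g gG.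
have jump_inv s g : s \in S -> g \in <<S>> -> jump c i0 x (g * s) = jump c i0 x g.
  move=> sS gG; have gsG : g * s \in <<S>> by rewrite groupM // mem_gen.
  have := jump_sum0 s _ sS gsG; have := jump_sum0 1 _ S1 gsG.
  rewrite invg1 mulg1 mulgK => sum0_1 sum0_s.
  by apply: (addIr (jump c i0 y (g * s))); rewrite sum0_1 sum0_s.
have jump_const := gen_right_invariant_const jump_inv.
have jump1_0 : jump c i0 x 1 = 0%R.
  apply: (Zp_mulrn_eq0 (prime_gt1 q_prime) _ (@jump_mulrn_order _ _ c i0 x _ _)).
    by rewrite oc prime_coprime // dvdn_prime2 // eq_sym.
  by move=> j; apply: jump_const; rewrite groupX.
by apply/semi_homogeneousP => // g gG; rewrite jump_const.
Qed.
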